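(* Let $\Gamma$ be a bipartite graph and let $f:\Gamma\to\Gamma$ be a graph map that preserves the bipartite structure and maps each edge to an edge path of length at least $1$. Then the split map $S(f):S(\Gamma)\to S(\Gamma)$ is a traintrack map.
   Context: A graph map sends vertices to vertices and each edge to an edge path (backtracking allowed). Let $\Gamma$ have vertex parts $V_0,V_1$ and edges $x_1,x_2,\dots$ each oriented from its $V_0$-endpoint to its $V_1$-endpoint; preserving the bipartite structure means $f(V_0)\subset V_0$, $f(V_1)\subset V_1$, so each $f(x_i)$ has odd number of edges $\|f(x_i)\|$. Prototype maps on $P_7$ (vertices $v_0,v_1$, edges $a,\dots,g$ oriented $v_0\to v_1$, uppercase = reversed): $\phi_1=\mathrm{id}$ and, for $m\ge0$, $\phi_{3+2m}$: $a\mapsto aG(aB)^ma$, $b\mapsto bD(bC)^mb$, $c\mapsto cF(cA)^mc$, $d\mapsto aB(aB)^ma$, $e\mapsto cB(aB)^ma$, $f\mapsto aC(aB)^ma$, $g\mapsto bE(bA)^mb$. The split graph $S(\Gamma)$ replaces each edge $x_i$ by seven parallel edges $a_i,\dots,g_i$ with the same endpoints and orientation. The split map $S(f)$ sends $y_i$ ($y\in\{a,\dots,g\}$) to the path obtained from the word $\phi_{\|f(x_i)\|}(y)$ by giving its $t$-th letter the subscript of the $t$-th edge of $f(x_i)$. Traintrack map: a direction at a vertex is an oriented edge germ leaving it; a turn is an unordered pair of directions at a vertex; a traintrack structure is a partition of turns into legal and illegal ones with every backtracking turn (a direction paired with itself) illegal; a path is legal if it is locally injective and makes only legal turns. A graph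 map $h$ is taut if it is a local embedding on the interior of each edge, and it is a traintrack map if it is taut and there is a traintrack structure such that $h$ sends legal turns to legal turns and every edge to a legal path. *)

From mathcomp Require Import all_boot.
Set Implicit Arguments. Unset Strict Implicit. Unset Printing Implicit Defensive.

(* An oriented edge (edge germ / letter) is a pair (e, b) : E * bool, where
   b = false means e traversed along its orientation, b = true means
   e traversed backwards (the "uppercase" letter). *)

Section Graphs.
Variables (V E : Type) (o t : E -> V).

Definition dedge := (E * bool)%type.
Definition dsrc (d : dedge) : V := if d.2 then t d.1 else o d.1.
Definition dtgt (d : dedge) : V := if d.2 then o d.1 else t d.1.
Definition drev (d : dedge) : dedge := (d.1, ~~ d.2).

Fixpoint chain (p : seq dedge) : Prop :=
  match p with
  | d1 :: ((d2 :: _) as p') => dtgt d1 = dsrc d2 /\ chain p'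
  | _ => True
  end.

Definition path_from (v w : V) (p : seq dedge) : Prop :=
  match p with
  | [::] => False
  | d :: q => dsrc d = v /\ dtgt (last d q) = w /\ chain p
  end.

Definition graph_map (hV : V -> V) (hE : E -> seq dedge) : Prop :=
  forall e, path_from (hV (o e)) (hV (t e)) (hE e).

Definition dimage (hE : E -> seq dedge) (d : dedge) : seq dedge :=
  if d.2 then rev (map drev (hE d.1)) else hE d.1.

Definition Dmap (hE : E -> seq dedge) (d : dedge) : dedge :=
  match dimage hE d with [::] => d | d' :: _ => d' end.

(* the turns taken by a path: at the junction of consecutive d1, d2
   the path makes the turn {drev d1, d2} at the vertex dtgt d1 = dsrc d2 *)
Fixpoint all_turns (P : dedge -> dedge -> Prop) (p : seq dedge) : Prop :=
  match p with
  | d1 :: ((d2 :: _) as p') => P (drev d1) d2 /\ all_turns P p'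
  | _ => True
  end.

Definition locally_injective (p : seq dedge) : Prop :=
  all_turns (fun d1 d2 => d1 <> d2) p.

Definition taut (hE : E -> seq dedge) : Prop :=
  forall e, locally_injective (hE e).

Definition traintrack_structure (legal : dedge -> dedge -> Prop) : Prop :=
  [/\ forall d1 d2, legal d1 d2 -> dsrc d1 = dsrc d2,
      forall d1 d2, legal d1 d2 -> legal d2 d1
    & forall d, ~ legal d d].

Definition legal_path (legal : dedge -> dedge -> Prop) (p : seq dedge) : Prop :=
  locally_injective p /\ all_turns legal p.

Definition traintrack_map (hV : V -> V) (hE : E -> seq dedge) : Prop :=
  [/\ graph_map hV hE, taut hE &
    exists legal : dedge -> dedge -> Prop,
      [/\ traintrack_structure legal,
          forall d1 d2, dsrc d1 = dsrc d2 -> legal d1 d2 ->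
                        legal (Dmap hE d1) (Dmap hE d2)
        & forall e, legal_path legal (hE e)]].

End Graphs.

(* part v = false : v in V_0 ; part v = true : v in V_1.
   Every edge is oriented from its V_0-endpoint to its V_1-endpoint. *)
Definition bipartite (V E : Type) (o t : E -> V) (part : V -> bool) : Prop :=
  forall e, part (o e) = false /\ part (t e) = true.

Inductive letter := La | Lb | Lc | Ld | Le | Lf | Lg.

Definition fw (x : letter) : letter * bool := (x, false).
Definition bw (x : letter) : letter * bool := (x, true).
Definition rep {T} (m : nat) (u : seq T) : seq T := flatten (nseq m u).

(* phi_1 = id ; phi_{3+2m} as in the paper (values for even n are
   irrelevant: they never occur) *)
Definition phi (n : nat) (y : letter) : seq (letter * bool) :=
  if n <= 1 then [:: fw y] else
  let m := (n - 3)./2 in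
  match y with
  | La => [:: fw La; bw Lg] ++ rep m [:: fw La; bw Lb] ++ [:: fw La]
  | Lb => [:: fw Lb; bw Ld] ++ rep m [:: fw Lb; bw Lc] ++ [:: fw Lb]
  | Lc => [:: fw Lc; bw Lf] ++ rep m [:: fw Lc; bw La] ++ [:: fw Lc]
  | Ld => [:: fw La; bw Lb] ++ rep m [:: fw La; bw Lb] ++ [:: fw La]
  | Le => [:: fw Lc; bw Lb] ++ rep m [:: fw La; bw Lb] ++ [:: fw La]
  | Lf => [:: fw La; bw Lc] ++ rep m [:: fw La; bw Lb] ++ [:: fw La]
  | Lg => [:: fw Lb; bw Le] ++ rep m [:: fw Lb; bw La] ++ [:: fw Lb]
  end.

Definition split_o (V E : Type) (o : E -> V) (x : E * letter) : V := o x.1.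
Definition split_t (V E : Type) (t : E -> V) (x : E * letter) : V := t x.1.

(* S(f)(y_i): the word phi_{||f(x_i)||}(y), whose t-th letter gets the
   subscript of (the edge underlying) the t-th oriented edge of f(x_i) *)
Definition split_mapE (E : Type) (fE : E -> seq (E * bool)) (x : E * letter)
  : seq ((E * letter) * bool) :=
  let p := fE x.1 in
  [seq ((pw.1.1, pw.2.1), pw.2.2) | pw <- zip p (phi (size p) x.2)].

From mathcomp Require Import all_boot.
Set Implicit Arguments. Unset Strict Implicit. Unset Printing Implicit Defensive.

(* Call a turn of S(Γ) legal when its two directions carry letters adjacent
   in the graph on {a,...,g} with edges ab, ac, ag, bc, bd, be, cf.
   Consecutive letters of every word φ_n(y) are adjacent there and the graph
   has no loops, so S(f) maps edges to legal, locally injective words.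
   Because f preserves the bipartition, every f(x_i) has odd length and its
   orientations alternate exactly like those of φ_{‖f(x_i)‖}(y), so S(f)(y_i)
   is an edge path lying over f(x_i).  All directions at a vertex point the
   same way (forwards at V_0, backwards at V_1), so the derivative of S(f) acts
   on their letters by the first-letter map, or by the last-letter map, of the
   words φ_n; both maps send adjacent letters to adjacent letters. *)

Section Turns.
Variable A : Type.

Lemma sub_all_turns (P Q : dedge A -> dedge A -> Prop) s :
  (forall d1 d2, P d1 d2 -> Q d1 d2) -> all_turns P s -> all_turns Q s.
Proof.
move=> PQ; elim: s => [//|d [//|d' s] IH] /= [hd hs].
by split; [apply: PQ | apply: IH].
Qed.

Lemma all_turns_and (P Q : dedge A -> dedge A -> Prop) s :
  all_turns P s -> all_turns Q s -> all_turns (fun d1 d2 => P d1 d2 /\ Q d1 d2) s.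
Proof.
elim: s => [//|d [//|d' s] IH] /= [hP1 hP2] [hQ1 hQ2].
by split; [split | apply: IH].
Qed.

End Turns.

Section Graphs.
Variables (V E : Type) (o t : E -> V).

Lemma dsrc_drev (d : dedge E) : dsrc o t (drev d) = dtgt o t d.
Proof. by case: d => e []. Qed.

Lemma chain_all_turns_dsrc s :
  chain o t s -> all_turns (fun d1 d2 => dsrc o t d1 = dsrc o t d2) s.
Proof.
elim: s => [//|d [//|d' s] IH] /= [hd hs].
by split; [rewrite dsrc_drev | apply: IH].
Qed.

Lemma DmapE (hE : E -> seq (dedge E)) d :
  Dmap hE d = if d.2 then drev (last (drev d) (hE d.1)) else head d (hE d.1).
Proof.
rewrite /Dmap /dimage; case: d => e [] /=; last by case: (hE e).
by case/lastP: (hE e) => [//|s z]; rewrite map_rcons rev_rcons last_rcons.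
Qed.

Lemma dsrc_Dmap hV hE d :
  graph_map o t hV hE -> dsrc o t (Dmap hE d) = hV (dsrc o t d).
Proof.
move=> /(_ d.1); rewrite DmapE; case: d => e [] /=;
  case: (hE e) => [//|d q] /= [hs [ht _]] //.
by rewrite dsrc_drev.
Qed.

End Graphs.

Fixpoint alt_signs (b : bool) (n : nat) : seq bool :=
  if n is n'.+1 then b :: alt_signs (~~ b) n' else [::].

Section Bipartite.
Variables (V E : Type) (o t : E -> V) (part : V -> bool).
Hypothesis bip : bipartite o t part.

Lemma part_dsrc (d : dedge E) : part (dsrc o t d) = d.2.
Proof. by case: d => e [] /=; case: (bip e). Qed.

Lemma part_dtgt (d : dedge E) : part (dtgt o t d) = ~~ d.2.
Proof. by case: d => e [] /=; case: (bip e). Qed.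

Lemma chain_signs d q :
  chain o t (d :: q) -> map snd (d :: q) = alt_signs d.2 (size q).+1.
Proof.
elim: q d => [//|d' q IH] d [hd hq].
change (d.2 :: map snd (d' :: q) = alt_signs d.2 (size q).+2).
rewrite (IH d' hq) (_ : d'.2 = ~~ d.2) //.
by rewrite -part_dsrc -hd part_dtgt.
Qed.

Lemma chain_last_sign d q : chain o t (d :: q) -> (last d q).2 = odd (size q) (+) d.2.
Proof.
elim: q d => [//|d' q IH] d [hd hq] /=.
rewrite (IH d' hq) (_ : d'.2 = ~~ d.2) ?addbN ?addNb //.
by rewrite -part_dsrc -hd part_dtgt.
Qed.

Lemma path_from_signs v w p :
  path_from o t v w p -> map snd p = alt_signs (part v) (size p).
Proof. by case: p => [//|d q] [<- [_ hc]]; rewrite part_dsrc chain_signs. Qed.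

Lemma path_from_parity v w p :
  path_from o t v w p -> part w = odd (size p) (+) part v.
Proof.
case: p => [//|d q] [<- [<- hc]].
by rewrite part_dsrc part_dtgt (chain_last_sign hc) /= addNb.
Qed.

End Bipartite.

(* The pairs of letters occurring consecutively in some word φ_n(y). *)
Definition legal_letters (x y : letter) : bool :=
  let adj x y :=
    match x, y with
    | La, Lb | La, Lc | La, Lg | Lb, Lc | Lb, Ld | Lb, Le | Lc, Lf => true
    | _, _ => false
    end in
  adj x y || adj y x.

Lemma legal_lettersC x y : legal_letters x y = legal_letters y x.
Proof. by rewrite /legal_letters orbC. Qed.

Lemma legal_letters_irr x : ~~ legal_letters x x.
Proof. by case: x. Qed.

Definition legal_word (w : seq (letter * bool)) : Prop :=
  all_turns (fun d1 d2 => legal_letters d1.1 d2.1) w.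

Definition head_letter n y := head y (map fst (phi n y)).
Definition last_letter n y := last y (map fst (phi n y)).

Lemma legal_letters_head m n x y :
  legal_letters x y -> legal_letters (head_letter m x) (head_letter n y).
Proof.
rewrite /head_letter /phi.
by case: (m <= 1); case: (n <= 1); case: x; case: y.
Qed.

Lemma legal_letters_last m n x y :
  legal_letters x y -> legal_letters (last_letter m x) (last_letter n y).
Proof.
rewrite /last_letter /phi.
by case: (m <= 1); case: (n <= 1); case: x; case: y; rewrite /= ?map_cat ?last_cat.
Qed.

Lemma legal_word_zigzag x b u v m : legal_letters x u -> legal_letters u v ->
  legal_word ((x, b) :: rep m [:: fw u; bw v] ++ [:: fw u]).
Proof.
elim: m x b => [|m IH] x b hxu huv; first by split.
by split; [| split; [| apply: IH; rewrite // legal_lettersC]].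
Qed.

Lemma legal_word_phi n y : legal_word (phi n y).
Proof.
rewrite /phi; case: (n <= 1) => //.
by case: y; (split; [| apply: legal_word_zigzag]).
Qed.

Lemma signs_zigzag u v m :
  map snd (rep m [:: fw u; bw v] ++ [:: fw u]) = alt_signs false m.*2.+1.
Proof.
elim: m => [//|m IH].
by rewrite doubleS -[RHS]/(false :: true :: alt_signs false m.*2.+1) -IH.
Qed.

Lemma signs_phi n y : odd n -> map snd (phi n y) = alt_signs false n.
Proof.
move=> odd_n; rewrite -[n](odd_double_half n) odd_n add1n.
case: n./2 => [//|k]; rewrite /phi.
have -> : (k.+1.*2.+1 - 3)./2 = k by rewrite doubleS !subSS subn0 doubleK.
by case: y; rewrite /= signs_zigzag.
Qed.

Section SplitGraph.
Variables (V E : Type) (o t : E -> V).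

Definition collapse (d : dedge (E * letter)) : dedge E := (d.1.1, d.2).

Definition subscript (p : seq (dedge E)) (w : seq (letter * bool)) :
    seq (dedge (E * letter)) :=
  [seq ((pw.1.1, pw.2.1), pw.2.2) | pw <- zip p w].

Definition split_legal (d1 d2 : dedge (E * letter)) : Prop :=
  dsrc (split_o o) (split_t t) d1 = dsrc (split_o o) (split_t t) d2 /\
  legal_letters d1.1.2 d2.1.2.

Lemma split_mapE_subscript fE x :
  split_mapE fE x = subscript (fE x.1) (phi (size (fE x.1)) x.2).
Proof. by []. Qed.

Lemma collapse_subscript p w : map snd p = map snd w -> map collapse (subscript p w) = p.
Proof. by elim: p w => [|[e b] p IH] [|[y c] w] //= [-> /IH ->]. Qed.

Lemma letters_subscript p w :
  size p = size w -> map (fun d => d.1.2) (subscript p w) = map fst w.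
Proof. by elim: p w => [|e p IH] [|c w] //= [/IH ->]. Qed.

Lemma legal_subscript p w : legal_word w ->
  all_turns (fun d1 d2 : dedge (E * letter) => legal_letters d1.1.2 d2.1.2) (subscript p w).
Proof.
elim: p w => [|e p IH] [|c w] //=.
case: p w IH => [|e' p] [|c' w] //= IH [hc hw].
by split; [| apply: (IH (c' :: w))].
Qed.

Lemma split_path_from v w s :
  path_from o t v w (map collapse s) -> path_from (split_o o) (split_t t) v w s.
Proof.
have split_chain r : chain o t (map collapse r) -> chain (split_o o) (split_t t) r.
  by elim: r => [//|d [//|d' r] IH] /= [hd hr]; split; [| apply: IH].
case: s => [//|d s] /= [hv [hw hc]].
by split; [| split; [rewrite last_map in hw | apply: (split_chain (d :: s))]].
Qed.

Lemma split_bipartite part : bipartite o t part -> bipartite (split_o o) (split_t t) part.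
Proof. by move=> bip x; apply: bip. Qed.

Lemma split_legal_traintrack : traintrack_structure (split_o o) (split_t t) split_legal.
Proof.
split.
- by move=> d1 d2 [].
- by move=> d1 d2 [hs hl]; split; rewrite // legal_lettersC.
- by move=> d [_]; rewrite (negbTE (legal_letters_irr _)).
Qed.

Lemma split_mapE_legal_letters (fE : E -> seq (dedge E)) x :
  all_turns (fun d1 d2 : dedge (E * letter) => legal_letters d1.1.2 d2.1.2) (split_mapE fE x).
Proof. exact/legal_subscript/legal_word_phi. Qed.

Lemma split_taut (fE : E -> seq (dedge E)) : taut (split_mapE fE).
Proof.
move=> x; apply: sub_all_turns (split_mapE_legal_letters fE x) => d1 d2 hl eq12.
by rewrite eq12 (negbTE (legal_letters_irr _)) in hl.
Qed.

End SplitGraph.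

Section SplitMap.
Variables (V E : Type) (o t : E -> V) (part : V -> bool).
Variables (fV : V -> V) (fE : E -> seq (dedge E)).
Hypotheses (bip : bipartite o t part) (fmap : graph_map o t fV fE).
Hypothesis fpart : forall v, part (fV v) = part v.

Lemma signs_image x y : map snd (fE x) = map snd (phi (size (fE x)) y).
Proof.
have odd_fx : odd (size (fE x)).
  have := path_from_parity bip (fmap x).
  by rewrite !fpart; case: (bip x) => -> ->; rewrite addbF.
by rewrite (path_from_signs bip (fmap x)) fpart (proj1 (bip x)) signs_phi.
Qed.

Lemma split_graph_map : graph_map (split_o o) (split_t t) fV (split_mapE fE).
Proof.
move=> x; apply: split_path_from.
rewrite split_mapE_subscript collapse_subscript; [exact: fmap | exact: signs_image].
Qed.

Lemma letter_Dmap_split d : (Dmap (split_mapE fE) d).1.2 =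
  (if d.2 then last_letter else head_letter) (size (fE d.1.1)) d.1.2.
Proof.
have letters : map (fun z => z.1.2) (split_mapE fE d.1) =
               map fst (phi (size (fE d.1.1)) d.1.2).
  by rewrite letters_subscript // -[LHS](size_map snd) (signs_image _ d.1.2) size_map.
rewrite DmapE /last_letter /head_letter; case: d.2 => /=; rewrite -letters.
  by rewrite (last_map _ _ (drev d)).
by case: (split_mapE fE d.1).
Qed.

Lemma split_Dmap_legal d1 d2 : split_legal o t d1 d2 ->
  split_legal o t (Dmap (split_mapE fE) d1) (Dmap (split_mapE fE) d2).
Proof.
move=> [hsrc hl]; split; first by rewrite !(dsrc_Dmap _ split_graph_map) hsrc.
have same_dir : d1.2 = d2.2.
  by rewrite -!(part_dsrc (split_bipartite bip)) hsrc.
rewrite !letter_Dmap_split -same_dir.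
by case: d1.2; [apply: legal_letters_last | apply: legal_letters_head].
Qed.

Lemma split_mapE_legal_path x : legal_path (split_legal o t) (split_mapE fE x).
Proof.
split; first exact: split_taut.
apply: all_turns_and; last exact: split_mapE_legal_letters.
by have := split_graph_map x; case: (split_mapE fE x) => [//|d s] [_ [_ /chain_all_turns_dsrc]].
Qed.

End SplitMap.

Theorem mainTheorem6 (V E : finType) (o t : E -> V) (part : V -> bool)
    (fV : V -> V) (fE : E -> seq (E * bool)) :
  bipartite o t part ->
  graph_map o t fV fE ->
  (forall v, part (fV v) = part v) ->
  traintrack_map (split_o o) (split_t t) fV (split_mapE fE).
Proof.
move=> bip fmap fpart; split.
- exact: split_graph_map.
- exact: split_taut.
exists (split_legal o t); split.
- exact: split_legal_traintrack.
- by move=> d1 d2 _; apply: split_Dmap_legal.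
- exact: split_mapE_legal_path.
Qed.
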